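(* A normed space $P$ is extremely projective in $\mathbf{Nor}$ if and only if $P$ is a near-retract in $\mathbf{Nor}$ of $l_1^0(\Lambda)$ for some index set $\Lambda$.
   Context: $\mathbf{Nor}$ is the category of normed spaces and bounded operators. An operator $\tau:F\to E$ is coisometric if $\|\tau\|\le1$ and for each $x\in E$, $\varepsilon>0$ there is $y\in F$ with $\tau(y)=x$, $\|y\|<\|x\|+\varepsilon$. A normed space $P$ is extremely projective in $\mathbf{Nor}$ if for every coisometric operator $\tau:F\to E$ between normed spaces, every bounded operator $\varphi:P\to E$ and every $\varepsilon>0$ there is a bounded $\psi:P\to F$ with $\tau\psi=\varphi$ and $\|\psi\|<\|\varphi\|+\varepsilon$. A contractive operator $\sigma:Q\to P$ is a near-retraction if for every $\varepsilon>0$ there is a bounded $\rho:P\to Q$ with $\sigma\rho=1_P$ and $\|\rho\|<1+\varepsilon$; then $P$ is a near-retract of $Q$. For a set $\Lambda$, $l_1^0(\Lambda)$ denotes the finitely supported functions on $\Lambda$ with the $l_1$-norm, and $l_1^0(\emptyset)=0$. *)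

From Stdlib Require Import Reals List ClassicalEpsilon.
Open Scope R_scope.

Record NormData := {
  carrier :> Type;
  vzero : carrier;
  vadd : carrier -> carrier -> carrier;
  vopp : carrier -> carrier;
  vscal : R -> carrier -> carrier;
  vnorm : carrier -> R
}.

Arguments vzero {_}.
Arguments vadd {_} _ _.
Arguments vopp {_} _.
Arguments vscal {_} _ _.
Arguments vnorm {_} _.

Definition is_normed_space (V : NormData) : Prop :=
  (forall x y z : V, vadd x (vadd y z) = vadd (vadd x y) z) /\
  (forall x y : V, vadd x y = vadd y x) /\
  (forall x : V, vadd x vzero = x) /\
  (forall x : V, vadd x (vopp x) = vzero) /\
  (forall (a b : R) (x : V), vscal a (vscal b x) = vscal (a * b) x) /\
  (forall x : V, vscal 1 x = x) /\
  (forall (a : R) (x y : V), vscal a (vadd x y) = vadd (vscal a x) (vscal a y)) /\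
  (forall (a b : R) (x : V), vscal (a + b) x = vadd (vscal a x) (vscal b x)) /\
  (forall x : V, vnorm x = 0 -> x = vzero) /\
  (forall (a : R) (x : V), vnorm (vscal a x) = Rabs a * vnorm x) /\
  (forall x y : V, vnorm (vadd x y) <= vnorm x + vnorm y).

Definition is_linear {V W : NormData} (f : V -> W) : Prop :=
  (forall x y : V, f (vadd x y) = vadd (f x) (f y)) /\
  (forall (a : R) (x : V), f (vscal a x) = vscal a (f x)).

Definition bounded_op {V W : NormData} (f : V -> W) : Prop :=
  is_linear f /\ exists c : R, forall x : V, vnorm (f x) <= c * vnorm x.

Definition is_opnorm {V W : NormData} (f : V -> W) (r : R) : Prop :=
  (forall x : V, vnorm (f x) <= r * vnorm x) /\
  (forall c : R, (forall x : V, vnorm (f x) <= c * vnorm x) -> r <= c).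

Definition contractive_op {V W : NormData} (f : V -> W) : Prop :=
  bounded_op f /\ exists r, is_opnorm f r /\ r <= 1.

Definition coisometric {F E : NormData} (tau : F -> E) : Prop :=
  contractive_op tau /\
  forall (x : E) (eps : R), 0 < eps ->
    exists y : F, tau y = x /\ vnorm y < vnorm x + eps.

Definition extremely_projective (P : NormData) : Prop :=
  forall (F E : NormData), is_normed_space F -> is_normed_space E ->
  forall tau : F -> E, coisometric tau ->
  forall phi : P -> E, bounded_op phi ->
  forall eps : R, 0 < eps ->
  exists psi : P -> F, bounded_op psi /\
    (forall x : P, tau (psi x) = phi x) /\
    (exists s r, is_opnorm psi s /\ is_opnorm phi r /\ s < r + eps).

Definition near_retraction {Q P : NormData} (sigma : Q -> P) : Prop :=
  contractive_op sigma /\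
  forall eps : R, 0 < eps ->
    exists rho : P -> Q, bounded_op rho /\
      (forall x : P, sigma (rho x) = x) /\
      (exists s, is_opnorm rho s /\ s < 1 + eps).

Definition near_retract_of (P Q : NormData) : Prop :=
  exists sigma : Q -> P, near_retraction sigma.

Definition fin_supp {L : Type} (f : L -> R) : Prop :=
  exists l : list L, forall x, f x <> 0 -> In x l.

Definition l10_car (L : Type) : Type := { f : L -> R | fin_supp f }.

Lemma fs_zero (L : Type) : fin_supp (fun _ : L => 0).
Proof. exists nil; intros x H; exfalso; apply H; reflexivity. Qed.

Lemma fs_add (L : Type) (f g : L -> R) :
  fin_supp f -> fin_supp g -> fin_supp (fun x => f x + g x).
Proof.
  intros [l1 H1] [l2 H2]; exists (l1 ++ l2); intros x Hx.
  apply in_or_app.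
  destruct (Req_dec (f x) 0) as [Hf|Hf].
  - right; apply H2; intro Hg; apply Hx; rewrite Hf, Hg; ring.
  - left; apply H1; exact Hf.
Qed.

Lemma fs_scal (L : Type) (a : R) (f : L -> R) :
  fin_supp f -> fin_supp (fun x => a * f x).
Proof.
  intros [l H]; exists l; intros x Hx; apply H; intro Hf; apply Hx;
  rewrite Hf; ring.
Qed.

Definition sum_abs_on {L : Type} (f : L -> R) (l : list L) : R :=
  fold_right (fun x acc => Rabs (f x) + acc) 0 l.

(* the l_1 norm: sum of |f x| over (any duplicate-free list containing) the support *)
Definition l1_norm {L : Type} (f : L -> R) : R :=
  epsilon (inhabits 0) (fun r => exists l : list L,
    NoDup l /\ (forall x, f x <> 0 -> In x l) /\ r = sum_abs_on f l).

Definition l10 (L : Type) : NormData := {|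
  carrier := l10_car L;
  vzero := exist _ (fun _ => 0) (fs_zero L);
  vadd := fun f g => exist _ (fun x => proj1_sig f x + proj1_sig g x)
                           (fs_add L _ _ (proj2_sig f) (proj2_sig g));
  vopp := fun f => exist _ (fun x => (-1) * proj1_sig f x)
                         (fs_scal L (-1) _ (proj2_sig f));
  vscal := fun a f => exist _ (fun x => a * proj1_sig f x)
                            (fs_scal L a _ (proj2_sig f));
  vnorm := fun f => l1_norm (proj1_sig f)
|}.

From Stdlib Require Import Reals Lra List ClassicalEpsilon FunctionalExtensionality ProofIrrelevance Classical.
Open Scope R_scope.

(* An operator on l_1^0(L) is the linear extension of its values on the unit vectors
   delta_a, and its norm is the supremum of those values.  So l_1^0(L) lifts through a
   coisometry tau at an arbitrarily small cost: send delta_a to a tau-preimage of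
   phi(delta_a) of norm < |phi(delta_a)| + d.  A near-retract P of l_1^0(L) inherits this
   by composing with the near-inverses rho, of norm < 1 + d.  Conversely, the map
   l_1^0(P) -> P with delta_x |-> x/|x| is a coisometry, and lifting the identity of an
   extremely projective P through it produces the near-inverses. *)

Section BigOp.
Context {M : Type} (op : M -> M -> M) (idx : M).
Hypotheses (opA : forall a b c, op a (op b c) = op (op a b) c)
  (opC : forall a b, op a b = op b a) (op1m : forall a, op idx a = a).

Definition big {I : Type} (t : I -> M) (l : list I) : M :=
  fold_right (fun i acc => op (t i) acc) idx l.

Lemma eq_big {I : Type} (t1 t2 : I -> M) l :
  (forall i, In i l -> t1 i = t2 i) -> big t1 l = big t2 l.
Proof.
  induction l as [|i l IH]; intros H; simpl; auto.
  rewrite (H i), IH; simpl; auto; intros; apply H; simpl; auto.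
Qed.

Lemma big1 {I : Type} (t : I -> M) l : (forall i, In i l -> t i = idx) -> big t l = idx.
Proof.
  induction l as [|i l IH]; intros H; simpl; auto.
  rewrite (H i), IH; simpl; auto; intros; apply H; simpl; auto.
Qed.

Lemma big_cat {I : Type} (t : I -> M) l1 l2 : big t (l1 ++ l2) = op (big t l1) (big t l2).
Proof. induction l1 as [|i l1 IH]; simpl. - now rewrite op1m. - now rewrite IH, opA. Qed.

Lemma big_split {I : Type} (t1 t2 : I -> M) l :
  big (fun i => op (t1 i) (t2 i)) l = op (big t1 l) (big t2 l).
Proof.
  induction l as [|i l IH]; simpl; [now rewrite op1m|].
  rewrite IH, !opA. f_equal. rewrite <- !opA. f_equal. apply opC.
Qed.

Lemma big_eq_on_support {I : Type} (t : I -> M) (S : I -> Prop) :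
  (forall i, ~ S i -> t i = idx) ->
  forall l1 l2, NoDup l1 -> NoDup l2 -> (forall i, S i -> (In i l1 <-> In i l2)) ->
  big t l1 = big t l2.
Proof.
  intros Hsupp l1. induction l1 as [|a l1 IH]; intros l2 N1 N2 H.
  - symmetry. apply big1. intros i Hi. apply Hsupp. intros Si. now apply (H i Si) in Hi.
  - apply NoDup_cons_iff in N1 as [Na N1].
    destruct (classic (In a l2)) as [Ha|Ha].
    + destruct (in_split _ _ Ha) as (l2a & l2b & ->).
      assert (Hrest : big t l1 = big t (l2a ++ l2b)).
      { apply IH; [exact N1 | now apply NoDup_remove_1 in N2|].
        apply NoDup_remove_2 in N2. intros i Si. specialize (H i Si).
        rewrite in_app_iff in *. simpl in H.
        destruct (classic (i = a)) as [->|Hia]; [tauto|]. intuition congruence. }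
      rewrite big_cat. simpl. rewrite Hrest, big_cat, !opA. f_equal. apply opC.
    + assert (Sa : ~ S a) by (intros Sa; apply Ha, (H a Sa); simpl; auto).
      simpl. rewrite Hsupp, op1m by exact Sa. apply IH; auto.
      intros i Si. specialize (H i Si). simpl in H.
      split; intros Hi; [tauto|]. apply H in Hi as [->|Hi]; tauto.
Qed.

End BigOp.

Section NormedSpace.
Context {V : NormData} (HV : is_normed_space V).

Lemma vaddA (x y z : V) : vadd x (vadd y z) = vadd (vadd x y) z.
Proof. destruct HV as (H & _). apply H. Qed.
Lemma vaddC (x y : V) : vadd x y = vadd y x.
Proof. destruct HV as (_ & H & _). apply H. Qed.
Lemma vaddr0 (x : V) : vadd x vzero = x.
Proof. destruct HV as (_ & _ & H & _). apply H. Qed.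
Lemma vaddrN (x : V) : vadd x (vopp x) = vzero.
Proof. destruct HV as (_ & _ & _ & H & _). apply H. Qed.
Lemma vscalA (a b : R) (x : V) : vscal a (vscal b x) = vscal (a * b) x.
Proof. destruct HV as (_ & _ & _ & _ & H & _). apply H. Qed.
Lemma vscal1 (x : V) : vscal 1 x = x.
Proof. destruct HV as (_ & _ & _ & _ & _ & H & _). apply H. Qed.
Lemma vscalDr (a : R) (x y : V) : vscal a (vadd x y) = vadd (vscal a x) (vscal a y).
Proof. destruct HV as (_ & _ & _ & _ & _ & _ & H & _). apply H. Qed.
Lemma vscalDl (a b : R) (x : V) : vscal (a + b) x = vadd (vscal a x) (vscal b x).
Proof. destruct HV as (_ & _ & _ & _ & _ & _ & _ & H & _). apply H. Qed.
Lemma vnorm_eq0 (x : V) : vnorm x = 0 -> x = vzero.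
Proof. destruct HV as (_ & _ & _ & _ & _ & _ & _ & _ & H & _). apply H. Qed.
Lemma vnormZ (a : R) (x : V) : vnorm (vscal a x) = Rabs a * vnorm x.
Proof. destruct HV as (_ & _ & _ & _ & _ & _ & _ & _ & _ & H & _). apply H. Qed.
Lemma vnormD (x y : V) : vnorm (vadd x y) <= vnorm x + vnorm y.
Proof. destruct HV as (_ & _ & _ & _ & _ & _ & _ & _ & _ & _ & H). apply H. Qed.

Lemma vadd0r (x : V) : vadd vzero x = x.
Proof. now rewrite vaddC, vaddr0. Qed.

Lemma vaddI (x y z : V) : vadd x y = vadd x z -> y = z.
Proof.
  intros E. apply (f_equal (vadd (vopp x))) in E.
  now rewrite !vaddA, (vaddC (vopp x)), vaddrN, !vadd0r in E.
Qed.

Lemma vscal0l (x : V) : vscal 0 x = vzero.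
Proof.
  apply (vaddI (vscal 0 x)). rewrite vaddr0, <- vscalDl. f_equal. ring.
Qed.

Lemma vscal0r (a : R) : vscal a (@vzero V) = vzero.
Proof. now rewrite <- (vscal0l vzero), vscalA, Rmult_0_r. Qed.

Lemma vnorm0 : vnorm (@vzero V) = 0.
Proof. rewrite <- (vscal0l vzero), vnormZ, Rabs_R0. ring. Qed.

Lemma vnorm_ge0 (x : V) : 0 <= vnorm x.
Proof.
  assert (E : vadd x (vscal (-1) x) = vzero).
  { rewrite <- (vscal1 x) at 1. rewrite <- vscalDl, Rplus_opp_r. apply vscal0l. }
  pose proof (vnormD x (vscal (-1) x)) as T.
  rewrite E, vnorm0, vnormZ, (Rabs_left (-1)) in T by lra. lra.
Qed.

Lemma vnorm_big {I : Type} (t : I -> V) l :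
  vnorm (big vadd vzero t l) <= big Rplus 0 (fun i => vnorm (t i)) l.
Proof.
  induction l as [|i l IH]; simpl; [rewrite vnorm0; lra|].
  eapply Rle_trans; [apply vnormD | lra].
Qed.

Lemma vscal_big {I : Type} (a : R) (t : I -> V) l :
  vscal a (big vadd vzero t l) = big vadd vzero (fun i => vscal a (t i)) l.
Proof.
  induction l as [|i l IH]; simpl; [apply vscal0r|]. now rewrite vscalDr, IH.
Qed.

End NormedSpace.

Section LinearMaps.
Context {V W : NormData} (HV : is_normed_space V) (HW : is_normed_space W).

Lemma linear0 (f : V -> W) : is_linear f -> f vzero = vzero.
Proof.
  intros [_ fZ]. now rewrite <- (vscal0l HV vzero), fZ, (vscal0l HW).
Qed.

Lemma linear_big (f : V -> W) {I : Type} (t : I -> V) l : is_linear f ->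
  f (big vadd vzero t l) = big vadd vzero (fun i => f (t i)) l.
Proof.
  intros Hf. induction l as [|i l IH]; simpl; [now apply linear0|].
  now rewrite (proj1 Hf), IH.
Qed.

(* [V] must contain a nonzero vector: on a zero space no real number is the least bound. *)
Lemma is_opnorm_exists (f : V -> W) (c : R) :
  (forall x, vnorm (f x) <= c * vnorm x) -> (exists x0 : V, vnorm x0 <> 0) ->
  exists r, is_opnorm f r.
Proof.
  intros Hc [x0 Hx0].
  set (A := fun t => exists x : V, vnorm x <> 0 /\ t = vnorm (f x) / vnorm x).
  assert (quotient_le : forall x b, vnorm x <> 0 -> vnorm (f x) <= b * vnorm x ->
                                    vnorm (f x) / vnorm x <= b).
  { intros x b Hx H. pose proof (vnorm_ge0 HV x).
    apply Rmult_le_reg_r with (vnorm x); [lra|].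
    unfold Rdiv. now rewrite Rmult_assoc, Rinv_l, Rmult_1_r. }
  destruct (completeness A) as [r [Hub Hleast]].
  - exists c. intros t [x [Hx ->]]. auto.
  - exists (vnorm (f x0) / vnorm x0), x0. auto.
  - exists r. split.
    + intros x. destruct (Req_dec (vnorm x) 0) as [E|E].
      * specialize (Hc x). rewrite E, Rmult_0_r in *. exact Hc.
      * assert (Hq : vnorm (f x) / vnorm x <= r) by (apply Hub; exists x; auto).
        pose proof (vnorm_ge0 HV x).
        apply (Rmult_le_compat_r (vnorm x)) in Hq; [|lra].
        unfold Rdiv in Hq. now rewrite Rmult_assoc, Rinv_l, Rmult_1_r in Hq.
    + intros b Hb. apply Hleast. intros t [x [Hx ->]]. auto.
Qed.

Lemma is_opnorm_nontrivial (f : V -> W) (r : R) :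
  is_opnorm f r -> exists x0 : V, vnorm x0 <> 0.
Proof.
  intros [Hub Hleast]. apply NNPP. intros Htriv.
  assert (r <= r - 1); [|lra].
  apply Hleast. intros x.
  assert (E : vnorm x = 0) by (apply NNPP; intros Hx; apply Htriv; now exists x).
  specialize (Hub x). rewrite E, Rmult_0_r in *. lra.
Qed.

Lemma is_opnorm_ge0 (f : V -> W) (r : R) : is_opnorm f r -> 0 <= r.
Proof.
  intros Hr. destruct (is_opnorm_nontrivial f r Hr) as [x0 Hx0].
  pose proof (vnorm_ge0 HV x0). pose proof (vnorm_ge0 HW (f x0)).
  pose proof (proj1 Hr x0).
  destruct (Rle_or_lt 0 r) as [|Hneg]; [assumption|].
  assert (r * vnorm x0 < 0) by (apply Rmult_neg_pos; lra). lra.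
Qed.

Lemma contractive_of_le (f : V -> W) :
  is_linear f -> (forall x, vnorm (f x) <= vnorm x) -> (exists x0 : V, vnorm x0 <> 0) ->
  contractive_op f.
Proof.
  intros Hlin Hle Hnt.
  assert (Hle1 : forall x, vnorm (f x) <= 1 * vnorm x) by (intros x; rewrite Rmult_1_l; auto).
  destruct (is_opnorm_exists f 1 Hle1 Hnt) as [r Hr].
  split; [split; [exact Hlin | now exists 1]|].
  exists r. split; [exact Hr|]. now apply Hr.
Qed.

End LinearMaps.

Definition classic_eq_dec {A : Type} (x y : A) : {x = y} + {x <> y} :=
  excluded_middle_informative (x = y).

Section L10.
Context {L : Type}.

Definition supp_cover (f : L -> R) (l : list L) : Prop := forall x, f x <> 0 -> In x l.

Lemma supp_cover_cat (f g : L -> R) l1 l2 :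
  supp_cover f l1 -> supp_cover g l2 ->
  let l := nodup classic_eq_dec (l1 ++ l2) in
  supp_cover f l /\ supp_cover g l /\ supp_cover (fun x => f x + g x) l.
Proof.
  intros C1 C2 l. unfold l, supp_cover.
  split; [|split]; intros x Hx; apply nodup_In, in_or_app; auto.
  destruct (Req_dec (f x) 0) as [E|E]; auto.
  right. apply C2. intros E2. apply Hx. rewrite E, E2. ring.
Qed.

Lemma supp_cover_scal (a : R) (f : L -> R) l :
  supp_cover f l -> supp_cover (fun x => a * f x) l.
Proof. intros C x Hx. apply C. intros E. apply Hx. rewrite E. ring. Qed.

Lemma l10_eq (f g : l10 L) : (forall x, proj1_sig f x = proj1_sig g x) -> f = g.
Proof.
  destruct f as [f Hf], g as [g Hg]. simpl. intros E.
  apply functional_extensionality in E. subst g. f_equal. apply proof_irrelevance.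
Qed.

Definition supp_list (f : l10 L) : list L :=
  epsilon (inhabits nil) (fun l => NoDup l /\ supp_cover (proj1_sig f) l).

Lemma supp_list_spec (f : l10 L) : NoDup (supp_list f) /\ supp_cover (proj1_sig f) (supp_list f).
Proof.
  unfold supp_list. apply epsilon_spec. destruct (proj2_sig f) as [l Hl].
  exists (nodup classic_eq_dec l). split; [apply NoDup_nodup|].
  intros x Hx. now apply nodup_In, Hl.
Qed.

Lemma sum_abs_on_ge0 (f : L -> R) l : 0 <= sum_abs_on f l.
Proof. induction l as [|x l IH]; simpl; [lra|]. pose proof (Rabs_pos (f x)). lra. Qed.

Lemma sum_abs_on_eq0 (f : L -> R) l : sum_abs_on f l = 0 -> forall x, In x l -> f x = 0.
Proof.
  induction l as [|y l IH]; simpl; [tauto|]. intros E x Hx.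
  pose proof (sum_abs_on_ge0 f l). pose proof (Rabs_pos (f y)).
  destruct Hx as [<-|Hx]; [|apply IH; [lra|exact Hx]].
  destruct (Req_dec (f y) 0) as [|Hy]; [assumption|].
  apply Rabs_pos_lt in Hy. lra.
Qed.

Lemma sum_abs_on_scal (a : R) (f : L -> R) l :
  sum_abs_on (fun x => a * f x) l = Rabs a * sum_abs_on f l.
Proof. induction l as [|x l IH]; simpl; [ring|]. rewrite IH, Rabs_mult. ring. Qed.

Lemma sum_abs_on_add_le (f g : L -> R) l :
  sum_abs_on (fun x => f x + g x) l <= sum_abs_on f l + sum_abs_on g l.
Proof.
  induction l as [|x l IH]; simpl; [lra|]. pose proof (Rabs_triang (f x) (g x)). lra.
Qed.

Lemma sum_abs_on_cover (f : L -> R) l1 l2 : NoDup l1 -> NoDup l2 ->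
  supp_cover f l1 -> supp_cover f l2 -> sum_abs_on f l1 = sum_abs_on f l2.
Proof.
  intros N1 N2 C1 C2.
  apply (big_eq_on_support Rplus 0 (fun a b c => eq_sym (Rplus_assoc a b c)) Rplus_comm Rplus_0_l)
    with (S := fun x => f x <> 0); auto.
  - intros x Hx. apply NNPP in Hx. now rewrite Hx, Rabs_R0.
  - split; auto.
Qed.

Lemma l1_norm_on (f : L -> R) l : NoDup l -> supp_cover f l -> l1_norm f = sum_abs_on f l.
Proof.
  intros N C. unfold l1_norm.
  destruct (epsilon_spec (inhabits 0) (fun r => exists l : list L,
    NoDup l /\ (forall x, f x <> 0 -> In x l) /\ r = sum_abs_on f l)) as [l' [N' [C' ->]]].
  - now exists (sum_abs_on f l), l.
  - now apply sum_abs_on_cover.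
Qed.

Lemma vnorm_l10 (f : l10 L) : vnorm f = sum_abs_on (proj1_sig f) (supp_list f).
Proof. destruct (supp_list_spec f). now apply l1_norm_on. Qed.

Lemma l10_normed : is_normed_space (l10 L).
Proof.
  repeat split; try (intros; apply l10_eq; simpl; intros; ring).
  - intros f Hf. rewrite vnorm_l10 in Hf. destruct (supp_list_spec f) as [_ C].
    apply l10_eq. intros x. simpl. apply NNPP. intros Hx.
    apply Hx, (sum_abs_on_eq0 _ _ Hf), C, Hx.
  - intros a f. destruct (supp_list_spec f) as [N C]. simpl.
    rewrite (l1_norm_on _ _ N C), (l1_norm_on _ _ N (supp_cover_scal a _ _ C)).
    apply sum_abs_on_scal.
  - intros f g. destruct (supp_list_spec f) as [_ Cf], (supp_list_spec g) as [_ Cg].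
    destruct (supp_cover_cat _ _ _ _ Cf Cg) as (Cf' & Cg' & Cfg). simpl.
    pose proof (NoDup_nodup classic_eq_dec (supp_list f ++ supp_list g)) as N.
    rewrite (l1_norm_on _ _ N Cf'), (l1_norm_on _ _ N Cg'), (l1_norm_on _ _ N Cfg).
    apply sum_abs_on_add_le.
Qed.

End L10.

Section UnitVectors.
Context {L : Type}.

Lemma fin_supp_delta (a : L) (c : R) :
  fin_supp (fun z => if classic_eq_dec z a then c else 0).
Proof.
  exists (a :: nil). intros z Hz. destruct (classic_eq_dec z a); [now left | contradiction].
Qed.

Definition delta (a : L) (c : R) : l10 L := exist _ _ (fin_supp_delta a c).

Lemma supp_cover_delta (a : L) (c : R) : supp_cover (proj1_sig (delta a c)) (a :: nil).
Proof. intros z Hz. simpl in Hz. destruct (classic_eq_dec z a); [now left | contradiction]. Qed.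

Lemma vnorm_delta (a : L) (c : R) : vnorm (delta a c) = Rabs c.
Proof.
  simpl. rewrite (l1_norm_on _ (a :: nil)); [| repeat constructor; auto | apply supp_cover_delta].
  simpl. destruct (classic_eq_dec a a) as [_|]; [ring | congruence].
Qed.

Lemma l10_big_apply {I : Type} (t : I -> l10 L) l z :
  proj1_sig (big vadd vzero t l) z = big Rplus 0 (fun i => proj1_sig (t i) z) l.
Proof.
  induction l as [|i l IH]; [reflexivity|].
  change (proj1_sig (t i) z + proj1_sig (big vadd vzero t l) z =
          proj1_sig (t i) z + big Rplus 0 (fun i => proj1_sig (t i) z) l).
  now rewrite IH.
Qed.

End UnitVectors.

Section L10Extension.
Context {L : Type} {V : NormData} (HV : is_normed_space V).

Definition l10_ext (y : L -> V) (f : l10 L) : V :=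
  big vadd vzero (fun a => vscal (proj1_sig f a) (y a)) (supp_list f).

Lemma l10_ext_on (y : L -> V) (f : l10 L) l : NoDup l -> supp_cover (proj1_sig f) l ->
  l10_ext y f = big vadd vzero (fun a => vscal (proj1_sig f a) (y a)) l.
Proof.
  intros N C. destruct (supp_list_spec f) as [N' C'].
  apply (big_eq_on_support vadd vzero (vaddA HV) (vaddC HV) (vadd0r HV))
    with (S := fun a => proj1_sig f a <> 0); auto.
  - intros a Ha. apply NNPP in Ha. rewrite Ha. apply (vscal0l HV).
  - split; auto.
Qed.

Lemma l10_ext_linear (y : L -> V) : is_linear (l10_ext y).
Proof.
  split.
  - intros f g. destruct (supp_list_spec f) as [_ Cf], (supp_list_spec g) as [_ Cg].
    destruct (supp_cover_cat _ _ _ _ Cf Cg) as (Cf' & Cg' & Cfg).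
    pose proof (NoDup_nodup classic_eq_dec (supp_list f ++ supp_list g)) as N.
    rewrite (l10_ext_on y f _ N Cf'), (l10_ext_on y g _ N Cg'), (l10_ext_on y (vadd f g) _ N Cfg).
    rewrite <- (big_split vadd vzero (vaddA HV) (vaddC HV) (vadd0r HV)).
    apply eq_big. intros a _. apply (vscalDl HV).
  - intros c f. destruct (supp_list_spec f) as [N C].
    rewrite (l10_ext_on y f _ N C), (l10_ext_on y (vscal c f) _ N (supp_cover_scal c _ _ C)).
    rewrite (vscal_big HV). apply eq_big. intros a _. symmetry. apply (vscalA HV).
Qed.

Lemma l10_ext_le (y : L -> V) (M : R) :
  (forall a, vnorm (y a) <= M) -> forall f, vnorm (l10_ext y f) <= M * vnorm f.
Proof.
  intros HM f. rewrite vnorm_l10. unfold l10_ext.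
  eapply Rle_trans; [apply (vnorm_big HV)|].
  induction (supp_list f) as [|a l IH]; simpl; [lra|].
  rewrite (vnormZ HV).
  pose proof (Rmult_le_compat_l _ _ _ (Rabs_pos (proj1_sig f a)) (HM a)). lra.
Qed.

Lemma l10_ext_delta (y : L -> V) (a : L) (c : R) : l10_ext y (delta a c) = vscal c (y a).
Proof.
  rewrite (l10_ext_on y _ (a :: nil)); [| repeat constructor; auto | apply supp_cover_delta].
  simpl. destruct (classic_eq_dec a a) as [_|]; [|congruence]. apply (vaddr0 HV).
Qed.

End L10Extension.

Lemma l10_ext_comp {L : Type} {V W : NormData} (HV : is_normed_space V) (HW : is_normed_space W)
  (g : V -> W) (y : L -> V) f :
  is_linear g -> g (l10_ext y f) = l10_ext (fun a => g (y a)) f.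
Proof.
  intros Hg. unfold l10_ext. rewrite (linear_big HV HW) by exact Hg.
  apply eq_big. intros a _. apply (proj2 Hg).
Qed.

Lemma l10_ext_delta_id {L : Type} (f : l10 L) : l10_ext (fun a => delta a 1) f = f.
Proof.
  apply l10_eq. intros z. unfold l10_ext. rewrite l10_big_apply. simpl.
  destruct (supp_list_spec f) as [N C].
  rewrite (big_eq_on_support Rplus 0 (fun a b c => eq_sym (Rplus_assoc a b c)) Rplus_comm Rplus_0_l _
             (fun a => a = z /\ proj1_sig f z <> 0)) with (l2 := z :: nil).
  - simpl. destruct (classic_eq_dec z z); [ring | congruence].
  - intros a Ha. destruct (classic_eq_dec z a) as [<-|]; [|ring].
    destruct (Req_dec (proj1_sig f z) 0) as [->|]; [ring | tauto].
  - exact N.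
  - repeat constructor; auto.
  - intros a [-> Hz]. simpl. split; auto.
Qed.

Lemma l10_ext_unique {L : Type} {V : NormData} (HV : is_normed_space V) (A : l10 L -> V) :
  is_linear A -> forall f, A f = l10_ext (fun a => A (delta a 1)) f.
Proof.
  intros HA f. rewrite <- (l10_ext_comp l10_normed HV) by exact HA.
  now rewrite l10_ext_delta_id.
Qed.

Lemma is_linear_comp {U V W : NormData} (f : U -> V) (g : V -> W) :
  is_linear f -> is_linear g -> is_linear (fun x => g (f x)).
Proof.
  intros [fD fZ] [gD gZ]. split; intros.
  - now rewrite fD, gD.
  - now rewrite fZ, gZ.
Qed.

Lemma l10_normalize_coisometric {V : NormData} (HV : is_normed_space V) :
  coisometric (l10_ext (fun x : V => vscal (/ vnorm x) x)).
Proof.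
  split.
  - apply (contractive_of_le l10_normed); [apply (l10_ext_linear HV) | |].
    + intros f. rewrite <- (Rmult_1_l (vnorm f)). apply (l10_ext_le HV).
      intros x. rewrite (vnormZ HV). destruct (Req_dec (vnorm x) 0) as [->|Hx]; [lra|].
      pose proof (vnorm_ge0 HV x).
      rewrite Rabs_right, Rinv_l by (auto; apply Rle_ge, Rlt_le, Rinv_0_lt_compat; lra). lra.
    + exists (delta vzero 1). rewrite vnorm_delta, Rabs_R1. lra.
  - intros x eps Heps. exists (delta x (vnorm x)).
    pose proof (vnorm_ge0 HV x). split.
    + rewrite (l10_ext_delta HV), (vscalA HV).
      destruct (Req_dec (vnorm x) 0) as [E|E].
      * apply (vnorm_eq0 HV) in E. rewrite E. apply (vscal0r HV).
      * rewrite Rinv_r by exact E. apply (vscal1 HV).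
    + rewrite vnorm_delta, Rabs_right by lra. lra.
Qed.

Lemma extremely_projective_near_retract (P : NormData) (HP : is_normed_space P) :
  extremely_projective P -> near_retract_of P (l10 P).
Proof.
  intros EP. set (sigma := l10_ext (fun x : P => vscal (/ vnorm x) x)).
  pose proof (l10_normalize_coisometric HP) as Hsigma.
  assert (Hid : bounded_op (fun x : P => x)) by (split; [split; auto | exists 1; intros; lra]).
  exists sigma. split; [apply Hsigma|]. intros eps Heps.
  destruct (EP (l10 P) P l10_normed HP sigma Hsigma (fun x => x) Hid eps Heps)
    as [rho [Hrho [Hsr [s [r [Hs [Hr Hsr_eps]]]]]]].
  exists rho. split; [exact Hrho|]. split; [exact Hsr|]. exists s. split; [exact Hs|].
  assert (r <= 1) by (apply Hr; intros; lra). lra.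
Qed.

Lemma l10_lift_coisometric {L : Type} {F E : NormData} (HF : is_normed_space F) (HE : is_normed_space E)
  (tau : F -> E) (g : l10 L -> E) (r d : R) :
  coisometric tau -> is_linear g -> 0 < d -> (forall a, vnorm (g (delta a 1)) <= r) ->
  exists h : l10 L -> F, is_linear h /\ (forall f, tau (h f) = g f) /\
    forall f, vnorm (h f) <= (r + d) * vnorm f.
Proof.
  intros [[[Tlin _] _] Hsurj] Hg Hd Hr.
  destruct (choice (fun a y => tau y = g (delta a 1) /\ vnorm y < vnorm (g (delta a 1)) + d))
    as [y Hy].
  { intros a. now apply Hsurj. }
  exists (l10_ext y). split; [apply (l10_ext_linear HF)|]. split.
  - intros f. rewrite (l10_ext_comp HF HE) by exact Tlin.
    rewrite (l10_ext_unique HE g Hg f). f_equal.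
    apply functional_extensionality. intros a. apply Hy.
  - apply (l10_ext_le HF). intros a. specialize (Hr a). destruct (Hy a). lra.
Qed.

Lemma exists_margin (r eps : R) : 0 <= r -> 0 < eps ->
  exists d, 0 < d /\ (r + d) * (1 + d) < r + eps.
Proof.
  intros Hr Heps. exists (Rmin 1 (eps / (r + 3))).
  assert (Hd1 := Rmin_l 1 (eps / (r + 3))). assert (Hd2 := Rmin_r 1 (eps / (r + 3))).
  set (d := Rmin 1 (eps / (r + 3))) in *.
  assert (Hd0 : 0 < d) by (apply Rmin_glb_lt; [lra | apply Rdiv_lt_0_compat; lra]).
  assert (d * (r + 3) <= eps).
  { apply (Rmult_le_compat_r (r + 3)) in Hd2; [|lra].
    unfold Rdiv in Hd2. now rewrite Rmult_assoc, Rinv_l, Rmult_1_r in Hd2 by lra. }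
  split; [exact Hd0 | nra].
Qed.

Lemma near_retract_extremely_projective (P : NormData) (HP : is_normed_space P) (L : Type) :
  near_retract_of P (l10 L) -> extremely_projective P.
Proof.
  intros [sigma [[[Slin _] [rs [Hrs Hrs1]]] Hnear]] F E HF HE tau Htau phi [Plin [c Hc]] eps Heps.
  destruct (Hnear 1 Rlt_0_1) as [rho1 [_ [_ [s1 [Hs1 _]]]]].
  pose proof (is_opnorm_nontrivial _ _ Hs1) as Pnt.
  destruct (is_opnorm_exists HP phi c Hc Pnt) as [r Hr].
  pose proof (is_opnorm_ge0 HP HE phi r Hr) as Hr0.
  destruct (exists_margin r eps Hr0 Heps) as [d [Hd0 Hd]].
  destruct (Hnear d Hd0) as [rho [[Rlin _] [Hsr [s [Hs Hs1d]]]]].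
  assert (Hunit : forall a, vnorm (phi (sigma (delta a 1))) <= r).
  { intros a. pose proof (proj1 Hrs (delta a 1)) as Hsa. rewrite vnorm_delta, Rabs_R1 in Hsa.
    pose proof (proj1 Hr (sigma (delta a 1))). pose proof (vnorm_ge0 HP (sigma (delta a 1))).
    nra. }
  destruct (l10_lift_coisometric HF HE tau (fun f => phi (sigma f)) r d Htau (is_linear_comp _ _ Slin Plin)
              Hd0 Hunit) as [h [Hlin [Hlift Hh]]].
  assert (Hpsi : forall x, vnorm (h (rho x)) <= ((r + d) * s) * vnorm x).
  { intros x. eapply Rle_trans; [apply Hh|]. rewrite Rmult_assoc.
    apply Rmult_le_compat_l; [lra | apply Hs]. }
  destruct (is_opnorm_exists HP _ _ Hpsi Pnt) as [s' Hs'].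
  exists (fun x => h (rho x)). split; [split; [now apply is_linear_comp | eauto]|]. split.
  - intros x. now rewrite Hlift, Hsr.
  - exists s', r. split; [exact Hs'|]. split; [exact Hr|].
    assert (s' <= (r + d) * s) by now apply Hs'.
    pose proof (is_opnorm_ge0 HP (@l10_normed L) rho s Hs). nra.
Qed.

Theorem mainTheorem3 (P : NormData) (HP : is_normed_space P) :
  extremely_projective P <-> exists L : Type, near_retract_of P (l10 L).
Proof.
  split.
  - intros EP. exists (carrier P). now apply extremely_projective_near_retract.
  - intros [L HL]. now apply (near_retract_extremely_projective P HP L).
Qed.
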